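(* Let $\mathcal T=(S,\Sigma,\kappa)$ be an STS, let $B\in\Sigma$, let $n\ge0$ and $\mathcal A=(A_0,\dots,A_n)\in\Sigma^{n+1}$, and let $p>0$. Assume that for every $\nu\in\mathrm{Dist}(S)$ such that $\nu_{\mathcal A}$ is well-defined, $\mathbb P^{\mathcal T}_{\nu_{\mathcal A}}(\mathbf F B)\ge p$. Then for every $\mu\in\mathrm{Dist}(S)$, $$\mathbb P^{\mathcal T}_\mu(\mathbf G\overline B\wedge\mathbf{GF}\phi_{\mathcal A})=0.$$ (In particular, for $n=0$ and $\mathcal A=(A)$: if $\mathbb P^{\mathcal T}_{\delta_s}(\mathbf F B)\ge p$ for all $s\in A$, then $\mathbb P^{\mathcal T}_\mu(\mathbf G\overline B\wedge\mathbf{GF}A)=0$ for all $\mu$.)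
   Context: A stochastic transition system (STS) is a triple $\mathcal T=(S,\Sigma,\kappa)$ where $(S,\Sigma)$ is a measurable space and $\kappa:S\times\Sigma\to[0,1]$ is a Markov kernel. $\mathrm{Dist}(S)$ is the set of probability distributions on $(S,\Sigma)$, $\delta_s$ the Dirac distribution at $s$. Runs are elements of $S^\omega$; $\mathrm{Cyl}(A_0,\dots,A_k)=\{s_0s_1\ldots: s_j\in A_j,\ 0\le j\le k\}$; $\mathbb P^{\mathcal T}_\mu$ is the probability measure on runs (with the $\sigma$-algebra generated by cylinders) induced by initial distribution $\mu$ and kernel $\kappa$. For a run $\rho=s_0s_1\ldots$, $\rho_{\ge k}=s_ks_{k+1}\ldots$. Notation: $\overline B=S\setminus B$; $\mathbf F B$ is the set of runs visiting $B$ at some step; $\mathbf G B$ the set of runs all of whose states lie in $B$; $\mathbf{GF}B$ the set of runs visiting $B$ infinitely often. For $\mathcal A=(A_0,\dots,A_n)\in\Sigma^{n+1}$, $\phi_{\mathcal A}$ is the set of runs $\rho$ with $s_j\in A_j$ for $0\le j\le n$, and $\mathbf{GF}\phi_{\mathcal A}$ is the set of runs $\rho$ such that $\rho_{\ge k}\in\phi_{\mathcal A}$ for infinitely many $k$. Conditional distribution: for $\nu\in\mathrm{Dist}(S)$ with $\mathbb P^{\mathcal T}_\nu(\mathrm{Cyl}(A_0,\dots,A_n))>0$, $\nu_{\mathcal A}$ is said to be well-defined and is the distribution $C\mapsto \mathbb P^{\mathcal T}_\nu(\mathrm{Cyl}(A_0,\dots,A_{n-1},A_n\cap C))/\mathbb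 P^{\mathcal T}_\nu(\mathrm{Cyl}(A_0,\dots,A_n))$ (the distribution of the state at step $n$ conditioned on $\phi_{\mathcal A}$); for a single set $A$ with $\nu(A)>0$, $\nu_A=\nu(\cdot\cap A)/\nu(A)$. *)

From HB Require Import structures.
From mathcomp Require Import all_boot all_order all_algebra.
From mathcomp Require Import all_classical all_reals all_analysis.
Set Implicit Arguments. Unset Strict Implicit. Unset Printing Implicit Defensive.
Import Order.TTheory GRing.Theory Num.Theory.
Local Open Scope classical_set_scope.
Local Open Scope ring_scope.

(* A stochastic transition system (S, Sigma, kappa) is given by a
   measurableType S (with display d) together with a probability kernel
   kappa : R.-pker S ~> S. *)

Definition run (S : Type) := nat -> S.

Definition cyl (S : Type) (k : nat) (A : nat -> set S) : set (run S) :=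
  [set rho | forall j, (j <= k)%N -> A j (rho j)].

Definition cylinders d (S : measurableType d) : set (set (run S)) :=
  [set C | exists k (A : nat -> set S), (forall j, measurable (A j)) /\ C = cyl k A].

Definition runT d (S : measurableType d) := g_sigma_algebraType (@cylinders d S).

Definition shiftA (S : Type) (A : nat -> set S) : nat -> set S := fun j => A j.+1.

(* tailp kappa A n s = probability, starting in s, that the next n states
   lie in A 1, ..., A n respectively:
   tailp A 0 s = 1 ;
   tailp A (n+1) s = \int_{A 1} tailp (shift A) n  d kappa(s, .) *)
Fixpoint tailp d (S : measurableType d) (R : realType) (kappa : R.-pker S ~> S)
  (n : nat) (A : nat -> set S) (s : S) {struct n} : \bar R :=
  match n with
  | 0 => 1%E
  | n'.+1 => (\int[kappa s]_(x in A 1%N) tailp kappa n' (shiftA A) x)%E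
  end.

(* P is the run measure P^T_mu induced by the initial distribution mu and kernel
   kappa: its value on every cylinder is
   \int_{A_0} mu(ds_0) \int_{A_1} kappa(s_0,ds_1) ... kappa(s_{k-1}, A_k).
   (By the pi-lambda theorem this determines P uniquely on the cylinder
   sigma-algebra, and such P exists by Ionescu-Tulcea.) *)
Definition is_run_measure d (S : measurableType d) (R : realType)
  (kappa : R.-pker S ~> S) (mu : probability S R) (P : probability (runT S) R) :=
  forall (k : nat) (A : nat -> set S), (forall j, measurable (A j)) ->
    P (cyl k A) = (\int[mu]_(x in A 0%N) tailp kappa k A x)%E.

Definition evF (S : Type) (B : set S) : set (run S) := [set rho | exists k, B (rho k)].
Definition evG (S : Type) (B : set S) : set (run S) := [set rho | forall k, B (rho k)].
Definition suffix (S : Type) (rho : run S) (k : nat) : run S := fun i => rho (i + k)%N.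
Definition evGF (S : Type) (phi : set (run S)) : set (run S) :=
  [set rho | forall m, exists2 k, (m <= k)%N & phi (suffix rho k)].

Definition capLast (S : Type) (n : nat) (A : nat -> set S) (C : set S) : nat -> set S :=
  fun j => if j == n then A j `&` C else A j.

(* nuA is the conditional distribution nu_A of the state at step n given
   phi_A, where Pnu is the run measure of nu (only meaningful when
   Pnu(Cyl(A_0..A_n)) > 0, i.e. nu_A well-defined). *)
Definition is_cond_dist d (S : measurableType d) (R : realType)
  (n : nat) (A : nat -> set S) (Pnu : probability (runT S) R) (nuA : probability S R) :=
  forall C, measurable C ->
    nuA C = (Pnu (cyl n (capLast n A C)) / Pnu (cyl n A))%E.

From Pilot Require Import Defs.

(* Let P be the run measure of an initial law mu and let E be the set of runs
   that never visit B although they see the pattern A = (A_0, ..., A_n)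
   infinitely often.  Occurrences of the pattern starting at times congruent
   to r modulo n + 1 never overlap, so E is covered by the n + 1 sets
   window_runs r of runs avoiding B with infinitely many occurrences of class
   r, and it suffices to show that each of them is negligible.

   The key estimate (one_window_bound) is the Markov property at the end of
   a window: if G is an event of the history up to time t, then conditioning
   the chain on G and then on seeing A on [t, t + n] yields a pair (nu, nu_A)
   as in the hypothesis, so the chain avoids B after time t + n with
   probability at most 1 - p.  Summing over the first window of class r after
   time K gives P (window_runs r ∩ G) <= q P G with q < 1 for every event G
   determined by finitely many states; since these events form an algebra
   generating the sigma-algebra of runs, the monotone class theorem extends
   the bound to G = window_runs r itself, which is therefore negligible. *)

From HB Require Import structures.
From mathcomp Require Import all_boot all_order all_algebra.
From mathcomp Require Import all_classical all_reals all_analysis.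
From mathcomp Require Import measurable_realfun.
From mathcomp Require Import ring lra.
Import Order.TTheory GRing.Theory Num.Theory.
Local Open Scope classical_set_scope.
Local Open Scope ring_scope.
Set Implicit Arguments. Unset Strict Implicit. Unset Printing Implicit Defensive.

Section restricted_measure.
Context d (T : measurableType d) (R : realType).
Local Open Scope ereal_scope.

Lemma integral_mrestr (mu : {measure set T -> \bar R}) (A D : set T)
  (mA : measurable A) (mD : measurable D) (f : T -> \bar R) :
  (forall x, 0 <= f x) -> measurable_fun setT f ->
  \int[mrestr mu mA]_(x in D) f x = \int[mu]_(x in D `&` A) f x.
Proof.
move=> f0 mf.
have DE : D = (D `&` A) `|` (D `\` A).
  by apply/seteqP; split => x; [case: (pselect (A x)) => Ax Dx; [left|right]|case=> -[]].
rewrite [in LHS]DE ge0_integral_setU //; last first.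
- by rewrite disj_set2E; apply/eqP/seteqP; split => x // -[[_ ?] [_ ?]].
- exact: measurable_funTS.
- exact: measurableD.
- exact: measurableI.
rewrite (@null_set_integral _ _ _ (mrestr mu mA) (D `\` A)); first last.
- change (mu ((D `\` A) `&` A) = 0).
  by rewrite (_ : _ `&` _ = set0) ?measure0//; apply/seteqP; split => x // -[[_ ?] ?].
- exact: measurable_funTS.
- exact: measurableD.
rewrite adde0; apply: eq_measure_integral => B mB BDA.
by change (mu (B `&` A) = mu B); rewrite setIidl// => x /BDA [].
Qed.

End restricted_measure.

Section density_measure.
Context d (T : measurableType d) (R : realType) (Q : {measure set T -> \bar R}).
Context (h : T -> \bar R).
Local Open Scope ereal_scope.

(* The measure with density h with respect to Q; the nonnegativity and
   measurability proofs are parameters so that its measure instance below is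
   canonical. *)
Definition density_measure (h0 : forall x, 0 <= h x) (mh : measurable_fun setT h) :
  set T -> \bar R := fun A => \int[Q]_(x in A) h x.

Context (h0 : forall x, 0 <= h x) (mh : measurable_fun setT h).

Let density_measure0 : density_measure h0 mh set0 = 0.
Proof. by rewrite /density_measure integral_set0. Qed.

Let density_measure_ge0 A : 0 <= density_measure h0 mh A.
Proof. by apply: integral_ge0 => x _. Qed.

Let density_measure_sigma_additive : semi_sigma_additive (density_measure h0 mh).
Proof.
move=> F mF tF mUF; rewrite /density_measure ge0_integral_bigcup//; last first.
  exact: measurable_funTS.
apply/cvg_closeP; split.
  by apply: is_cvg_nneseries => n _ _; exact: integral_ge0.
by rewrite closeE.
Qed.

HB.instance Definition _ := isMeasure.Build _ _ _ (density_measure h0 mh)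
  density_measure0 density_measure_ge0 density_measure_sigma_additive.

End density_measure.

Section constant_kernel.
Context d (S : measurableType d) (R : realType) (nu : {measure set S -> \bar R})
  (nu_fin : (nu setT < +oo)%E).

(* The finite kernel that ignores its argument and always returns nu; it takes
   the finiteness proof as a parameter so that the finite-kernel instance
   below can be declared canonically. *)
Definition kconst (_ : (nu setT < +oo)%E) : S -> {measure set S -> \bar R} :=
  fun _ => nu.

Let kconst_measurable U (mU : measurable U) :
  measurable_fun [set: S] (fun x => (kconst nu_fin x U : \bar R)).
Proof. exact: measurable_cst. Qed.

HB.instance Definition _ := isKernel.Build _ _ S S R (kconst nu_fin) kconst_measurable.

Let kconst_uub : measure_fam_uub (kconst nu_fin).
Proof.
exists (fine (nu setT) + 1)%R => x; rewrite /kconst.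
have hf : (nu setT \is a fin_num)%E by rewrite ge0_fin_numE// measure_ge0.
by rewrite -(fineK hf) lte_fin ltrDl.
Qed.

HB.instance Definition _ := Kernel_isFinite.Build _ _ S S R (kconst nu_fin) kconst_uub.

End constant_kernel.

Section restricted_kernel.
Context d (S : measurableType d) (R : realType) (kappa : R.-pker S ~> S).
Context (C : set S) (mC : measurable C).

Definition krestr : S * S -> {measure set S -> \bar R} :=
  fun xy => mrestr (kappa xy.2) mC.

Let krestr_measurable U (mU : measurable U) :
  measurable_fun [set: S * S] (fun x => (krestr x U : \bar R)).
Proof.
apply: (measurableT_comp (f := fun y => kappa y (U `&` C)) (g := snd)).
  exact/measurable_kernel/measurableI.
exact: measurable_snd.
Qed.

HB.instance Definition _ := isKernel.Build _ _ (S * S)%type S R krestr krestr_measurable.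

Let krestr_uub : measure_fam_uub krestr.
Proof.
exists 2%R => xy; rewrite /krestr /mrestr /=.
apply: (le_lt_trans (y := kappa xy.2 setT)).
  by apply: le_measure; rewrite ?inE//; exact: measurableI.
by rewrite prob_kernel lte1n.
Qed.

HB.instance Definition _ := Kernel_isFinite.Build _ _ _ S R krestr krestr_uub.

End restricted_kernel.

Section kernel_mixture.
Context d (S : measurableType d) (R : realType) (kappa : R.-pker S ~> S).
Local Open Scope ereal_scope.

(* Integrals over C of the mixture of kappa by a finite measure nu are
   integrals against a finite measure; obtained as the composition of the
   constant kernel nu with the restricted kernel. *)
Lemma kernel_mixture (nu : {measure set S -> \bar R}) (nu_fin : nu setT < +oo)
  (C : set S) (mC : measurable C) :
  exists nu' : {measure set S -> \bar R}, nu' setT < +oo /\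
   (forall f, (forall x, 0 <= f x) -> measurable_fun setT f ->
      \int[nu']_x f x = \int[nu]_y \int[kappa y]_(x in C) f x).
Proof.
pose l := kconst nu_fin; pose k := krestr kappa mC.
exists (mkcomp l k point); split.
  rewrite /= /kcomp /=.
  have -> : \int[l point]_y k (point, y) [set: S] = \int[nu]_y kappa y C.
    by apply: eq_integral => y _; change (kappa y (setT `&` C) = kappa y C); rewrite setTI.
  apply: (@le_lt_trans _ _ (\int[nu]_y (cst 1 y))); last by rewrite integral_cst// mul1e.
  apply: (@ge0_le_integral _ _ _ nu setT measurableT (fun y => kappa y C) (cst 1)) => //.
  - exact: measurable_kernel.
  - move=> y _; apply: (@le_trans _ _ (kappa y setT)); last by rewrite prob_kernel.
    by apply: le_measure; rewrite ?inE.
move=> f f0 mf; rewrite integral_kcomp//=.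
by apply: eq_integral => y _; rewrite integral_mrestr// setTI.
Qed.

Lemma measurable_kernel_integral (C : set S) (mC : measurable C) (f : S -> \bar R) :
  (forall x, 0 <= f x) -> measurable_fun setT f ->
  measurable_fun setT (fun x => \int[kappa x]_(y in C) f y).
Proof.
move=> f0 mf; under eq_fun do rewrite integral_mkcond.
apply: measurable_fun_integral_kernel.
- by move=> U mU; exact: measurable_kernel.
- by move=> z; rewrite /patch; case: ifP => // _; exact: f0.
- by apply/(measurable_restrictT _ mC); exact: measurable_funTS.
Qed.

End kernel_mixture.

Lemma fin_prob d (T : measurableType d) (R : realType) (Q : probability T R) (X : set T) :
  measurable X -> (Q X \is a fin_num)%E.
Proof.
by move=> mX; rewrite ge0_fin_numE ?measure_ge0// (le_lt_trans (probability_le1 _ mX)) ?ltry.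
Qed.

Lemma prob_lt_oo d (T : measurableType d) (R : realType) (Q : probability T R) (X : set T) :
  measurable X -> (Q X < +oo)%E.
Proof. by move=> mX; rewrite ltey_eq fin_prob. Qed.

Section nested_integrals.
Context d (S : measurableType d) (R : realType) (kappa : R.-pker S ~> S).
Local Open Scope ereal_scope.

Fixpoint nest (t : nat) (X : nat -> set S) (g : S -> \bar R) (s : S) {struct t} : \bar R :=
  match t with
  | 0 => g s
  | t'.+1 => \int[kappa s]_(x in X 1%N) nest t' (shiftA X) g x
  end.

Lemma nest_ge0 t X g : (forall x, 0 <= g x) -> forall s, 0 <= nest t X g s.
Proof.
move=> g0; elim: t X => [|t IH] X s /=; first exact: g0.
by apply: integral_ge0 => x _; exact: IH.
Qed.

Lemma measurable_nest t X g : (forall i, measurable (X i)) -> (forall x, 0 <= g x) ->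
  measurable_fun setT g -> measurable_fun setT (nest t X g).
Proof.
move=> + g0 mg; elim: t X => [|t IH] X mX //=.
apply: measurable_kernel_integral => //; first by move=> x; exact: nest_ge0.
by apply: IH => i; exact: mX.
Qed.

(* tailp is a nest of tailps: the Markov property at the level of kernels. *)
Lemma tailp_nest t j X s : tailp kappa (t + j) X s =
  nest t X (tailp kappa j (fun i => X (i + t)%N)) s.
Proof.
elim: t X s => [|t IH] X s /=.
  by congr (tailp _ _ _ _); apply/funext => i; rewrite addn0.
rewrite ?addSn /=; apply: eq_integral => x _; rewrite IH.
by congr (nest _ _ (tailp _ _ _) _); apply/funext => i; rewrite /shiftA addnS.
Qed.

Lemma tailp_nest1 j X : tailp kappa j X = nest j X (fun _ => 1).
Proof. by apply/funext => s; rewrite -[j in LHS]addn0 tailp_nest. Qed.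

Lemma tailp_ge0 j X s : 0 <= tailp kappa j X s.
Proof. by rewrite tailp_nest1; apply: nest_ge0. Qed.

Lemma measurable_tailp j X : (forall i, measurable (X i)) ->
  measurable_fun setT (tailp kappa j X).
Proof.
by move=> mX; rewrite tailp_nest1; apply: measurable_nest => //; exact: measurable_cst.
Qed.

Lemma eq_tailp j (X X' : nat -> set S) : (forall i, (0 < i)%N -> X i = X' i) ->
  tailp kappa j X = tailp kappa j X'.
Proof.
elim: j X X' => [|j IH] X X' H //; apply/funext => s /=.
by rewrite (H 1%N)// (IH (shiftA X) (shiftA X'))// => i _; exact: H.
Qed.

Lemma nest_capLast t X D g s :
  nest t.+1 (capLast t.+1 X D) g s = nest t.+1 X (fun x => g x * (\1_D x)%:E) s.
Proof.
elim: t X s => [|t IH] X s.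
  rewrite /= /capLast /= integral_mkcondr; apply: eq_integral => x _.
  by rewrite /patch indicE; case: (x \in D); rewrite ?mule1 ?mule0.
change (\int[kappa s]_(x in X 1%N) nest t.+1 (shiftA (capLast t.+2 X D)) g x =
  \int[kappa s]_(x in X 1%N) nest t.+1 (shiftA X) (fun x => g x * (\1_D x)%:E) x).
by apply: eq_integral => x _; rewrite -IH.
Qed.

Lemma kernel_step (mu : {measure set S -> \bar R}) (mu_fin : mu setT < +oo)
  (X0 X1 : set S) (mX0 : measurable X0) (mX1 : measurable X1) :
  exists nu : {measure set S -> \bar R}, nu setT < +oo /\
   (forall f, (forall x, 0 <= f x) -> measurable_fun setT f ->
      \int[nu]_(x in X1) f x = \int[mu]_(x in X0) \int[kappa x]_(y in X1) f y).
Proof.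
have mrfin : mrestr mu mX0 setT < +oo.
  apply: le_lt_trans mu_fin; apply: le_measure; rewrite ?inE//; exact: measurableI.
have [nu [nu_fin Hnu]] := kernel_mixture kappa mrfin mX1.
exists nu; split => // f f0 mf.
have fX1 z : 0 <= (f \_ X1) z by rewrite /patch; case: ifP.
have mfX1 : measurable_fun setT (f \_ X1).
  by apply/(measurable_restrictT _ mX1); exact: measurable_funTS.
rewrite integral_mkcond Hnu// integral_mrestr//; last first.
  exact: measurable_kernel_integral.
  by move=> x; exact: integral_ge0.
rewrite setTI; apply: eq_integral => x _; apply: eq_integral => y.
by rewrite inE => y1; rewrite /patch mem_set.
Qed.

Lemma integral_nest t : forall X, (forall i, measurable (X i)) ->
  forall (mu m : {measure set S -> \bar R}), mu setT < +oo ->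
  (forall D, measurable D ->
     m D = \int[mu]_(x in X 0%N) nest t X (fun y => (\1_D y)%:E) x) ->
  forall g, (forall x, 0 <= g x) -> measurable_fun setT g ->
  \int[m]_x g x = \int[mu]_(x in X 0%N) nest t X g x.
Proof.
elim: t => [|t IH] X mX mu m mu_fin hm g g0 mg.
  rewrite /=; transitivity (\int[mrestr mu (mX 0%N)]_x g x).
    by apply: eq_measure_integral => A mA _; rewrite hm//= integral_indic.
  by rewrite integral_mrestr// setTI.
have [nu [nu_fin Hnu]] := kernel_step mu_fin (mX 0%N) (mX 1%N).
have mnest h : (forall x, 0 <= h x) -> measurable_fun setT h ->
    measurable_fun setT (nest t (shiftA X) h).
  by move=> h0 mh; apply: measurable_nest => // i; exact: mX.
rewrite [RHS]/= -Hnu; last 2 first.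
- by move=> x; exact: nest_ge0.
- exact: mnest.
apply: (IH (shiftA X)) => // [i|D mD]; first exact: mX.
rewrite hm// Hnu//=; first by move=> x; apply: nest_ge0 => y; rewrite lee_fin.
apply: mnest; first by move=> y; rewrite lee_fin.
by apply/measurable_EFinP; exact: measurable_indic.
Qed.

End nested_integrals.

Section run_events.
Context d (S : measurableType d).

Definition hist (t : nat) (C : nat -> set S) : set (run S) :=
  [set rho | forall i, (i < t)%N -> C i (rho i)].

Definition shift_ev (t : nat) (W : set (run S)) : set (run S) :=
  [set rho | W (Defs.suffix rho t)].

Definition padA (n : nat) (A : nat -> set S) : nat -> set S :=
  fun j => if (j <= n)%N then A j else setT.

Definition concat (t : nat) (C D : nat -> set S) : nat -> set S :=
  fun i => if (i < t)%N then C i else D (i - t)%N.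

Lemma cyl_padA n A : cyl n (padA n A) = cyl n A.
Proof. by apply/seteqP; split => rho H j jn; have := H j jn; rewrite /padA jn. Qed.

Lemma measurable_padA n A : (forall j, (j <= n)%N -> measurable (A j)) ->
  forall j, measurable (padA n A j).
Proof. by move=> mA j; rewrite /padA; case: ifP => // /mA. Qed.

Lemma measurable_cyl k A : (forall j, measurable (A j)) ->
  measurable (cyl k A : set (runT S)).
Proof. by move=> mA; apply: sub_sigma_algebra; exists k, A. Qed.

Lemma hist_cyl t C : hist t.+1 C = cyl t C.
Proof. by apply/seteqP; split => rho H i hi; apply: H. Qed.

Lemma hist0 C : hist 0 C = setT.
Proof. by apply/seteqP; split => rho. Qed.

Lemma measurable_hist t C : (forall i, measurable (C i)) ->
  measurable (hist t C : set (runT S)).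
Proof. by case: t => [|t] mC; rewrite ?hist0 ?hist_cyl//; exact: measurable_cyl. Qed.

Lemma measurable_state t : measurable_fun [set: runT S] (fun rho : runT S => (rho t : S)).
Proof.
move=> _ D mD; rewrite setTI.
have -> : (fun rho : runT S => (rho t : S)) @^-1` D =
   cyl t (fun i => if i == t then D else setT).
  apply/seteqP; split => rho /=; first by move=> Dt j _; case: ifP => // /eqP ->.
  by move=> /(_ t (leqnn t)); rewrite eqxx.
by apply: measurable_cyl => j; case: ifP.
Qed.

Lemma measurable_capLast t (X : nat -> set S) (D : set S) :
  (forall i, measurable (X i)) -> measurable D -> forall i, measurable (capLast t X D i).
Proof. by move=> mX mD i; rewrite /capLast; case: ifP => _ //; exact: measurableI. Qed.

Lemma cyl_capLast t X D :
  (fun rho : run S => rho t) @^-1` D `&` cyl t X = cyl t (capLast t X D).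
Proof.
apply/seteqP; split => rho.
  move=> [/= Dt H] i it; rewrite /capLast; case: eqP => [->|_]; last exact: H.
  by split => //; exact: H.
move=> H; split => /=; first by have := H t (leqnn t); rewrite /capLast eqxx => -[].
by move=> i it; have := H i it; rewrite /capLast; case: ifP => // _ [].
Qed.

Lemma hist_shift_cyl t C j D :
  hist t C `&` shift_ev t (cyl j D) = cyl (t + j) (concat t C D).
Proof.
apply/seteqP; split.
- move=> rho [Hc Hd] i ile; rewrite /concat; case: ltnP => [it|ti]; first exact: Hc.
  by have := Hd (i - t)%N; rewrite /Defs.suffix subnK//; apply; rewrite leq_subLR.
- move=> rho H; split.
    by move=> i it; have := H i (ltnW (leq_trans it (leq_addr j t))); rewrite /concat it.
  move=> i ij; have := H (i + t)%N; rewrite /concat ltnNge leq_addl /= addnK; apply.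
  by rewrite addnC leq_add2l.
Qed.

Lemma cyl_concat t C D :
  cyl t (concat t C D) = hist t C `&` [set rho | D 0%N (rho t)].
Proof.
apply/seteqP; split.
- move=> rho H; split; first by move=> i it; have := H i (ltnW it); rewrite /concat it.
  by have := H t (leqnn t); rewrite /concat ltnn subnn.
- move=> rho [Hc Hd] i; rewrite leq_eqVlt => /orP[/eqP ->|it].
    by rewrite /concat ltnn subnn.
  by rewrite /concat it; exact: Hc.
Qed.

Lemma concat_shift t C D : (fun i => concat t C D (i + t)%N) = D.
Proof. by apply/funext => i; rewrite /concat ltnNge leq_addl /= addnK. Qed.

Lemma hist_succ t (C : nat -> set S) j (D : nat -> set S) :
  hist t.+1 C `&` shift_ev t (cyl j D) =
  hist t C `&` shift_ev t (cyl j (fun i => if i == 0%N then C t `&` D 0%N else D i)).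
Proof.
apply/seteqP; split.
- move=> rho [Hc Hd]; split; first by move=> i it; apply: Hc; exact: ltnW.
  move=> i ij; case: eqP => [i0|_]; last exact: Hd.
  subst i; split; last exact: Hd.
  by have := Hc t (ltnSn t); rewrite /Defs.suffix add0n.
- move=> rho [Hc Hd]; split.
    move=> i; rewrite ltnS leq_eqVlt => /orP[/eqP ->|it]; last exact: Hc.
    by have := Hd 0%N (leq0n j); rewrite eqxx /Defs.suffix add0n => -[].
  by move=> i ij; have := Hd i ij; case: eqP => // -> [].
Qed.

Lemma measurable_shift_cyl t j (D : nat -> set S) : (forall i, measurable (D i)) ->
  measurable (shift_ev t (cyl j D) : set (runT S)).
Proof.
move=> mD; have := hist_shift_cyl t (fun _ => setT) j D.
have -> : hist t (fun _ => @setT S) = setT by apply/seteqP; split.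
rewrite setTI => ->; apply: measurable_cyl => i.
by rewrite /concat; case: ifP.
Qed.

End run_events.

Section history_sigma_algebras.
Context d (S : measurableType d).

Definition hist_events t : set (set (runT S)) :=
  [set H | exists C : nat -> set S, (forall i, measurable (C i)) /\ H = hist t C].

Lemma hist_events_measurable t : hist_events t `<=` measurable.
Proof. by move=> _ [C [mC ->]]; exact: measurable_hist. Qed.

Lemma hist_events_setT t : hist_events t setT.
Proof. by exists (fun _ => setT); split => //; apply/seteqP; split => rho. Qed.

Lemma hist_events_setI t : setI_closed (hist_events t).
Proof.
move=> _ _ [C [mC ->]] [C' [mC' ->]]; exists (fun i => C i `&` C' i); split.
  by move=> i; exact: measurableI.
apply/seteqP; split => rho; first by move=> [H1 H2] i it; split; [exact: H1|exact: H2].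
by move=> H; split => i it; have [] := H i it.
Qed.

Lemma hist_sigma_measurable t : <<s hist_events t >> `<=` measurable.
Proof.
by apply: smallest_sub; [exact: sigma_algebra_measurable|exact: hist_events_measurable].
Qed.

Lemma hist_sigmaI k (X Y : set (runT S)) :
  <<s hist_events k >> X -> <<s hist_events k >> Y -> <<s hist_events k >> (X `&` Y).
Proof. exact: (@measurableI _ (g_sigma_algebraType (hist_events k))). Qed.

Lemma hist_sigma_mono a b : (a <= b)%N ->
  <<s hist_events a >> `<=` <<s hist_events b >>.
Proof.
move=> ab; apply: sub_sigma_algebra2 => _ [C [mC ->]].
exists (fun i => if (i < a)%N then C i else setT); split; first by move=> i; case: ifP.
apply/seteqP; split => rho H i hi; first by case: ifP => // ia; exact: H.
by have := H i (leq_trans hi ab); rewrite hi.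
Qed.

Lemma hist_sigma_shift_cyl t j (D : nat -> set S) : (forall i, measurable (D i)) ->
  <<s hist_events (t + j).+1 >> (shift_ev t (cyl j D)).
Proof.
move=> mD; apply: sub_sigma_algebra.
exists (concat t (fun _ => setT) D); split; first by move=> i; rewrite /concat; case: ifP.
rewrite hist_cyl -hist_shift_cyl.
by rewrite (_ : hist t _ = setT) ?setTI//; apply/seteqP; split.
Qed.

End history_sigma_algebras.

Section invariance_events.
Context d (S : measurableType d).

Lemma evG_cyl (C : set S) : evG C = \bigcap_N cyl N (fun _ => C).
Proof.
apply/seteqP; split => rho; first by move=> H N _ j _; exact: H.
by move=> H k; exact: (H k I k (leqnn k)).
Qed.

Lemma measurable_evG (C : set S) : measurable C -> measurable (evG C : set (runT S)).
Proof.
by move=> mC; rewrite evG_cyl; apply: bigcapT_measurable => N; exact: measurable_cyl.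
Qed.

Lemma measurable_shift_evG t (C : set S) : measurable C ->
  measurable (shift_ev t (evG C) : set (runT S)).
Proof.
have -> : shift_ev t (evG C) = \bigcap_N shift_ev t (cyl N (fun _ => C)).
  apply/seteqP; split => rho; first by move=> H N _ j _; exact: H.
  by move=> H k; exact: (H k I k (leqnn k)).
by move=> mC; apply: bigcapT_measurable => N; exact: measurable_shift_cyl.
Qed.

Lemma evF_evG (B : set S) : evF B = ~` evG (~` B).
Proof.
apply/seteqP; split => rho; first by move=> [k Bk] H; exact: (H k).
by move=> /existsNP [k /contrapT Bk]; exists k.
Qed.

End invariance_events.

Section state_law.
Context d (S : measurableType d) (R : realType) (Q : {measure set (runT S) -> \bar R}).
Context (t : nat).
Local Open Scope ereal_scope.

Let mstate := @measurable_state _ S t.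

Definition state_law : set S -> \bar R :=
  fun A => Q ((fun rho : runT S => (rho t : S)) @^-1` A).

Let state_law0 : state_law set0 = 0.
Proof. by rewrite /state_law preimage_set0 measure0. Qed.

Let state_law_ge0 A : 0 <= state_law A.
Proof. exact: measure_ge0. Qed.

Let state_law_sigma_additive : semi_sigma_additive state_law.
Proof.
move=> F mF tF mUF; rewrite /state_law preimage_bigcup.
apply: measure_semi_sigma_additive.
- by move=> n; rewrite -[X in measurable X]setTI; exact: mstate.
- apply/trivIsetP => /= i j _ _ ij; rewrite -preimage_setI.
  by move/trivIsetP : tF => /(_ _ _ _ _ ij) ->//; rewrite preimage_set0.
- by rewrite -preimage_bigcup -[X in measurable X]setTI; exact: mstate.
Qed.

HB.instance Definition _ := isMeasure.Build _ _ _
  state_law state_law0 state_law_ge0 state_law_sigma_additive.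

Lemma integral_state_law (f : S -> \bar R) :
  (forall x, 0 <= f x) -> measurable_fun setT f ->
  \int[state_law]_x f x = \int[Q]_rho f (rho t).
Proof.
move=> f0 mf.
have -> : \int[state_law]_x f x =
    \int[pushforward Q (fun rho : runT S => (rho t : S))]_x f x.
  by apply: eq_measure_integral.
by rewrite ge0_integral_pushforward// preimage_setT.
Qed.

End state_law.

Section markov_property.
Context d (S : measurableType d) (R : realType) (kappa : R.-pker S ~> S).
Context (mu : probability S R) (P : probability (runT S) R)
  (HP : is_run_measure kappa mu P).
Local Open Scope ereal_scope.

Lemma run_measure_cyl_capLast t X D : (forall i, measurable (X i)) -> measurable D ->
  P (cyl t (capLast t X D)) =
  \int[mu]_(x in X 0%N) nest kappa t X (fun y => (\1_D y)%:E) x.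
Proof.
move=> mX mD; rewrite (HP t (measurable_capLast t mX mD)).
case: t => [|t].
  rewrite /= /capLast /= integral_mkcondr; apply: eq_integral => x _.
  by rewrite /patch indicE; case: (x \in D).
rewrite /capLast [X in \int[_]_(_ in X) _]/=; apply: eq_integral => x _.
rewrite tailp_nest1 -/(capLast t.+1 X D) nest_capLast.
by congr (nest _ _ _ _ _); apply/funext => y; rewrite mul1e.
Qed.

Lemma run_measure_cyl_split t j X : (forall i, measurable (X i)) ->
  P (cyl (t + j) X) =
  \int[P]_(rho in cyl t X) tailp kappa j (fun i => X (i + t)%N) (rho t).
Proof.
move=> mX; rewrite HP//.
under eq_integral do rewrite tailp_nest.
set h := tailp kappa j _.
have h0 x : 0 <= h x by exact: tailp_ge0.
have mh : measurable_fun setT h by apply: measurable_tailp => i; exact: mX.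
have mc := measurable_cyl t mX.
rewrite -(setTI (cyl t X)) -integral_mrestr//; last first.
  exact: (measurableT_comp mh (@measurable_state _ S t)).
rewrite -integral_state_law//.
symmetry; apply: (integral_nest mX) => //; first exact: prob_lt_oo.
move=> D mD.
change (P ((fun rho : runT S => (rho t : S)) @^-1` D `&` cyl t X) =
  \int[mu]_(x in X 0%N) nest kappa t X (fun y : S => (\1_D y)%:E) x).
by rewrite cyl_capLast run_measure_cyl_capLast.
Qed.

(* Markov property: given an event G of the history up to time t, the
   future from time t is distributed as a chain started at the state at t. *)
Lemma markov_history t j (D : nat -> set S) (mD : forall i, measurable (D i))
  (G : set (runT S)) : <<s hist_events t.+1 >> G ->
  P (G `&` shift_ev t (cyl j D)) =
  \int[P]_(rho in G) ((tailp kappa j D) \_ (D 0%N)) (rho t).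
Proof.
move=> HG; set h := fun rho : runT S => ((tailp kappa j D) \_ (D 0%N)) (rho t).
have h0 x : 0 <= h x by rewrite /h /patch; case: ifP => // _; exact: tailp_ge0.
have mh : measurable_fun setT h.
  apply: (measurableT_comp (f := (tailp kappa j D) \_ (D 0%N))); last exact: measurable_state.
  by apply/(measurable_restrictT _ (mD 0%N)); apply: measurable_funTS; exact: measurable_tailp.
have mW := measurable_shift_cyl t j mD.
have := @g_sigma_algebra_measure_unique _ R (runT S) (hist_events t.+1)
  (@hist_events_measurable _ S t.+1) (fun _ => setT) (fun _ => @hist_events_setT _ S t.+1) _
  (mrestr P mW) (density_measure P h0 mh) (@hist_events_setI _ S t.+1).
apply => //.
- by apply/seteqP; split => // x _; exists 0%N.
- move=> _ [C [mC ->]].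
  change (P (hist t.+1 C `&` shift_ev t (cyl j D)) = \int[P]_(x in hist t.+1 C) h x).
  rewrite hist_succ hist_shift_cyl run_measure_cyl_split; last first.
    by move=> i; rewrite /concat; case: ifP => _ //; case: eqP => _ //; exact: measurableI.
  rewrite concat_shift cyl_concat.
  have -> : hist t.+1 C = hist t C `&` [set rho | C t (rho t)].
    apply/seteqP; split; first by move=> rho H; split; [move=> i it; apply: H; exact: ltnW|exact: H].
    move=> rho [H1 H2] i; rewrite ltnS leq_eqVlt => /orP[/eqP ->//|]; exact: H1.
  rewrite !integral_mkcondr; apply: eq_integral => rho _.
  rewrite /patch /h /patch /= (@eq_tailp _ _ _ kappa j _ D); last by case.
  have -> : rho \in [set rho | C t (rho t) /\ D 0%N (rho t)] =
      (rho \in [set rho | C t (rho t)]) && (rho t \in D 0%N) by exact: in_setI.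
  by case: (rho \in _); case: (rho t \in _).
- by move=> _; rewrite /= /mrestr setTI; exact: prob_lt_oo.
Qed.

End markov_property.

Section conditioned_state.
Context d (S : measurableType d) (R : realType) (kappa : R.-pker S ~> S).
Context (mu : probability S R) (P : probability (runT S) R)
  (HP : is_run_measure kappa mu P).
Context (Pr : probability S R -> probability (runT S) R)
  (HPr : forall nu : probability S R, is_run_measure kappa nu (Pr nu)).
Local Open Scope ereal_scope.

(* The law of the state at time t under P conditioned on G (mu is only a
   fallback when P G = 0). *)
Definition cond_state (G : set (runT S)) (mG : measurable G) (t : nat) : probability S R :=
  mnormalize (state_law (mrestr P mG) t) mu.

Lemma cond_stateE (G : set (runT S)) (mG : measurable G) t (PG : 0 < P G) U :
  cond_state mG t U =
  P ((fun rho : runT S => (rho t : S)) @^-1` U `&` G) * ((fine (P G))^-1)%:E.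
Proof.
have law_setT : state_law (mrestr P mG) t setT = P G.
  by rewrite /state_law /= /mrestr preimage_setT setTI.
change ((let evidence := state_law (mrestr P mG) t setT in
  if (evidence == 0) || (evidence == +oo) then fun U => mu U
  else fun U => state_law (mrestr P mG) t U * ((fine evidence)^-1)%:E) U =
  P ((fun rho : runT S => (rho t : S)) @^-1` U `&` G) * ((fine (P G))^-1)%:E).
by rewrite law_setT /= gt_eqF// lt_eqF ?prob_lt_oo.
Qed.

Lemma integral_cond_state (G : set (runT S)) (mG : measurable G) t (PG : 0 < P G)
  (Y : set S) (mY : measurable Y) (f : S -> \bar R) :
  (forall x, 0 <= f x) -> measurable_fun setT f ->
  \int[cond_state mG t]_(x in Y) f x =
  ((fine (P G))^-1)%:E * \int[P]_(rho in G) (f \_ Y) (rho t).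
Proof.
move=> f0 mf.
have c0 : (0 <= (fine (P G))^-1)%R by rewrite invr_ge0 fine_ge0.
have fY0 x : 0 <= (f \_ Y) x by rewrite /patch; case: ifP.
have mfY : measurable_fun setT (f \_ Y).
  by apply/(measurable_restrictT _ mY); exact: measurable_funTS.
rewrite integral_mkcond.
transitivity (\int[mscale (NngNum c0) (state_law (mrestr P mG) t)]_x (f \_ Y) x).
  apply: eq_measure_integral => A mA _.
  transitivity (P ((fun rho : runT S => (rho t : S)) @^-1` A `&` G) * ((fine (P G))^-1)%:E).
    exact: cond_stateE.
  by rewrite muleC.
rewrite ge0_integral_mscale//; congr (_ * _).
rewrite integral_state_law// integral_mrestr// ?setTI//.
exact: (measurableT_comp mfY (@measurable_state _ S t)).
Qed.

Lemma cond_state_cyl t (G : set (runT S)) (HG : <<s hist_events t.+1 >> G)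
  (mG : measurable G) (PG : 0 < P G) N (Y : nat -> set S) (mY : forall i, measurable (Y i)) :
  Pr (cond_state mG t) (cyl N Y) = P (G `&` shift_ev t (cyl N Y)) * ((fine (P G))^-1)%:E.
Proof.
rewrite (HPr _ N mY) integral_cond_state//; last 2 first.
- by move=> x; exact: tailp_ge0.
- exact: measurable_tailp.
by rewrite (markov_history HP)// muleC.
Qed.

End conditioned_state.

(* Invariance is the limit of cylinders, so the conditional identity of
   cond_state_cyl extends to it. *)
Lemma cond_state_evG d (S : measurableType d) (R : realType) (kappa : R.-pker S ~> S)
  (mu : probability S R) (Pr : probability S R -> probability (runT S) R)
  (HPr : forall nu : probability S R, is_run_measure kappa nu (Pr nu))
  t (G : set (runT S)) (HG : <<s hist_events t.+1 >> G) (mG : measurable G)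
  (PG : (0 < Pr mu G)%E) (C : set S) (mC : measurable C) :
  Pr mu (G `&` shift_ev t (evG C)) =
  ((fine (Pr mu G))%:E * Pr (cond_state mu (Pr mu) mG t) (evG C))%E.
Proof.
set nu := cond_state mu (Pr mu) mG t.
have mcyl N : measurable (cyl N (fun _ => C) : set (runT S)).
  by apply: measurable_cyl => _.
have mshift N : measurable (G `&` shift_ev t (cyl N (fun _ => C)) : set (runT S)).
  by apply: measurableI => //; exact: measurable_shift_cyl.
have lhs : (fun N => Pr mu (G `&` shift_ev t (cyl N (fun _ => C)))) @ \oo -->
    Pr mu (G `&` shift_ev t (evG C)).
  have -> : G `&` shift_ev t (evG C) = \bigcap_N (G `&` shift_ev t (cyl N (fun _ => C))).
    rewrite bigcapIr; last by exists 0%N.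
    congr (_ `&` _); apply/seteqP; split => rho; first by move=> H N _ j _; exact: H.
    by move=> H k; exact: (H k I k (leqnn k)).
  apply: nonincreasing_cvg_mu => //.
  - exact: prob_lt_oo.
  - exact: bigcapT_measurable.
  - move=> a b ab; apply/subsetPset; apply: setIS => rho H j jb; apply: H.
    exact: leq_trans jb ab.
have rhs : (fun N => Pr nu (cyl N (fun _ => C))) @ \oo --> Pr nu (evG C).
  rewrite evG_cyl; apply: nonincreasing_cvg_mu => //.
  - exact: prob_lt_oo.
  - exact: bigcapT_measurable.
  - move=> a b ab; apply/subsetPset => rho H j jb; apply: H.
    exact: leq_trans jb ab.
have fPG : (fine (Pr mu G) != 0)%R by rewrite fine_eq0 ?gt_eqF ?fin_prob.
have eqN N : Pr mu (G `&` shift_ev t (cyl N (fun _ => C))) =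
    ((fine (Pr mu G))%:E * Pr nu (cyl N (fun _ => C)))%E.
  rewrite /nu (cond_state_cyl (HPr mu) HPr HG mG PG N (fun=> mC)) muleCA -EFinM.
  by rewrite divff// mule1.
move: lhs; rewrite (funext eqN) => lhs.
by rewrite -(cvg_lim _ lhs)// -(cvg_lim _ (cvgeZl _ rhs)).
Qed.

Lemma ediv_rescale (R : realType) (a b : \bar R) (c : R) :
  a \is a fin_num -> b \is a fin_num -> fine b != 0%R -> c != 0%R ->
  ((a * (c^-1)%:E) / (b * (c^-1)%:E))%E = (a * ((fine b)^-1)%:E)%E.
Proof.
move: a b => [a| |] [b| |] // _ _ /= hb hc.
rewrite -!EFinM inver mulf_eq0 invr_eq0 (negbTE hb) (negbTE hc) /= -EFinM.
by congr (_%:E); field; rewrite hb hc.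
Qed.

Section one_window.
Context d (S : measurableType d) (R : realType) (kappa : R.-pker S ~> S).
Context (Pr : probability S R -> probability (runT S) R)
  (HPr : forall nu : probability S R, is_run_measure kappa nu (Pr nu)).
Context (mu : probability S R).
Context (B : set S) (mB : measurable B) (n : nat) (A : nat -> set S)
  (mA : forall j, (j <= n)%N -> measurable (A j)) (p : R)
  (hyp : forall (nu nuA : probability S R),
      (0 < Pr nu (cyl n A))%E ->
      is_cond_dist n A (Pr nu) nuA ->
      (p%:E <= Pr nuA (evF B))%E).
Local Open Scope ereal_scope.

Let P := Pr mu.

Lemma measurable_shift_cylA t : measurable (shift_ev t (cyl n A) : set (runT S)).
Proof. by rewrite -cyl_padA; apply: measurable_shift_cyl; exact: measurable_padA. Qed.

Lemma hist_sigma_window t (G : set (runT S)) : <<s hist_events t.+1 >> G ->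
  <<s hist_events (t + n).+1 >> (G `&` shift_ev t (cyl n A)).
Proof.
move=> HG; apply: hist_sigmaI; first by apply: (hist_sigma_mono _ HG); rewrite ltnS leq_addr.
by rewrite -cyl_padA; apply: hist_sigma_shift_cyl; exact: measurable_padA.
Qed.

Lemma window_cond_dist t (G : set (runT S)) (HG : <<s hist_events t.+1 >> G)
  (mG : measurable G) (mGA : measurable (G `&` shift_ev t (cyl n A)))
  (PGA : 0 < P (G `&` shift_ev t (cyl n A))) :
  0 < Pr (cond_state mu P mG t) (cyl n A) /\
  is_cond_dist n A (Pr (cond_state mu P mG t)) (cond_state mu P mGA (t + n)).
Proof.
set GA := G `&` shift_ev t (cyl n A).
have mAp := measurable_padA mA.
have PG : 0 < P G.
  by apply: (lt_le_trans PGA); apply: le_measure; rewrite ?inE//; exact: subIsetl.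
have fPG : (0 < fine (P G))%R by apply: fine_gt0; rewrite PG prob_lt_oo.
have fPGA : (0 < fine (P GA))%R by apply: fine_gt0; rewrite PGA prob_lt_oo.
have PrA : Pr (cond_state mu P mG t) (cyl n A) = P GA * ((fine (P G))^-1)%:E.
  by rewrite -cyl_padA (cond_state_cyl (HPr mu) HPr HG mG PG n mAp) cyl_padA.
split; first by rewrite PrA mule_gt0// lte_fin invr_gt0.
move=> C mC.
have E1 : cyl n (capLast n A C) = cyl n (capLast n (padA n A) C).
  by apply/seteqP; split => rho H j jn; have := H j jn; rewrite /capLast /padA jn.
have E2 : G `&` shift_ev t (cyl n (capLast n (padA n A) C)) =
    (fun rho : runT S => (rho (t + n)%N : S)) @^-1` C `&` GA.
  apply/seteqP; split => rho.
    move=> [Gr H]; split; last split => //.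
      by have := H n (leqnn n); rewrite /capLast eqxx /Defs.suffix addnC => -[].
    move=> j jn; have := H j jn; rewrite /capLast /padA jn.
    by case: ifP => // _ [].
  move=> [Cr [Gr H]]; split => // j jn; have Hj := H j jn.
  rewrite /capLast /padA jn; case: eqP => [jE|_] //.
  by subst j; split => //; rewrite /Defs.suffix addnC.
rewrite (cond_stateE mu mGA (t + n) PGA C) E1.
rewrite (cond_state_cyl (HPr mu) HPr HG mG PG n (measurable_capLast n mAp mC)) E2 PrA.
rewrite ediv_rescale ?gt_eqF// fin_prob//; apply: measurableI => //.
by rewrite -(setTI (_ @^-1` _)); exact: (@measurable_state _ S (t + n)%N).
Qed.

Lemma one_window_bound t (G : set (runT S)) : <<s hist_events t.+1 >> G ->
  P (G `&` shift_ev t (cyl n A) `&` shift_ev (t + n) (evG (~` B))) <=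
  (1 - p)%:E * P (G `&` shift_ev t (cyl n A)).
Proof.
move=> HG; set GA := G `&` shift_ev t (cyl n A).
have HGA := hist_sigma_window HG.
have mG := hist_sigma_measurable HG.
have mGA := hist_sigma_measurable HGA.
have mnB : measurable (~` B) by exact: measurableC.
have mGAE := measurableI _ _ mGA (measurable_shift_evG (t + n) mnB).
have [PGA0|PGAn0] := eqVneq (P GA) 0.
  by rewrite PGA0 mule0 -PGA0; apply: le_measure; rewrite ?inE//; exact: subIsetl.
have PGA : 0 < P GA by rewrite lt_neqAle eq_sym PGAn0 measure_ge0.
have [pos cond] := window_cond_dist HG mG mGA PGA.
have := hyp pos cond; rewrite evF_evG probability_setC//; last exact: measurable_evG.
rewrite (cond_state_evG HPr HGA mGA PGA mnB).
set x := Pr _ (evG (~` B)); have xf : x \is a fin_num by exact: fin_prob (measurable_evG mnB).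
rewrite -(fineK xf) -EFinB lee_fin => px.
rewrite -(fineK (fin_prob P mGA)) -!EFinM lee_fin.
have := fine_ge0 (measure_ge0 P GA); nra.
Qed.

End one_window.

(* A set E with P (E ∩ G) <= q P G for all G of an algebra generating the
   sigma-algebra, q < 1, is negligible (monotone class theorem). *)

Section ratio_bound.
Context d (T : measurableType d) (R : realType) (P : probability T R).
Context (E : set T) (mE : measurable E) (q : R).
Local Open Scope ereal_scope.

Definition ratio_bounded : set (set T) :=
  [set G | measurable G /\ P (E `&` G) <= q%:E * P G].

Lemma lim_ratio_bound (u v : nat -> \bar R) (a b : \bar R) :
  u @ \oo --> a -> v @ \oo --> b -> (forall i, u i <= q%:E * v i) -> a <= q%:E * b.
Proof.
move=> cu cv uv; rewrite -(cvg_lim _ cu)// -(cvg_lim _ cv)// -limeMl//; last first.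
  by apply/cvg_ex; eexists; exact: cv.
apply: lee_lim; last exact: nearW.
  by apply/cvg_ex; eexists; exact: cu.
by apply: is_cvgeZl => //; apply/cvg_ex; eexists; exact: cv.
Qed.

Lemma ratio_bounded_monotone : monotone ratio_bounded.
Proof.
split.
- move=> F ndF MF; split; first by apply: bigcupT_measurable => i; exact: (MF i).1.
  have c1 : (fun i => P (E `&` F i)) @ \oo --> P (E `&` \bigcup_i F i).
    rewrite setI_bigcupr; apply: nondecreasing_cvg_mu.
    + by move=> i; apply: measurableI => //; exact: (MF i).1.
    + by apply: bigcupT_measurable => i; apply: measurableI => //; exact: (MF i).1.
    + move=> a b ab; apply/subsetPset; apply: setIS; exact/subsetPset/ndF.
  have c2 : (fun i => P (F i)) @ \oo --> P (\bigcup_i F i).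
    apply: nondecreasing_cvg_mu => //.
    + by move=> i; exact: (MF i).1.
    + by apply: bigcupT_measurable => i; exact: (MF i).1.
  by apply: lim_ratio_bound c1 c2 _ => i; exact: (MF i).2.
- move=> F niF MF; split; first by apply: bigcapT_measurable => i; exact: (MF i).1.
  have c1 : (fun i => P (E `&` F i)) @ \oo --> P (E `&` \bigcap_i F i).
    rewrite -bigcapIr; last by exists 0%N.
    apply: nonincreasing_cvg_mu.
    + by apply: prob_lt_oo; apply: measurableI => //; exact: (MF 0%N).1.
    + by move=> i; apply: measurableI => //; exact: (MF i).1.
    + by apply: bigcapT_measurable => i; apply: measurableI => //; exact: (MF i).1.
    + move=> a b ab; apply/subsetPset; apply: setIS; exact/subsetPset/niF.
  have c2 : (fun i => P (F i)) @ \oo --> P (\bigcap_i F i).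
    apply: nonincreasing_cvg_mu => //.
    + exact: prob_lt_oo (MF 0%N).1.
    + by move=> i; exact: (MF i).1.
    + by apply: bigcapT_measurable => i; exact: (MF i).1.
  by apply: lim_ratio_bound c1 c2 _ => i; exact: (MF i).2.
Qed.

Lemma ratio_bound_null (Alg : set (set T)) : setring Alg -> Alg `<=` ratio_bounded ->
  <<sr Alg >> E -> (0 <= q)%R -> (q < 1)%R -> P E = 0.
Proof.
move=> ringA AM EA q0 q1.
have [_] := monotone_setring_sub_g_sigma_ring ratio_bounded_monotone ringA AM EA.
rewrite setIid -(fineK (fin_prob P mE)) -EFinM lee_fin => h.
apply/eqP; rewrite eqe; apply/eqP.
have := fine_ge0 (measure_ge0 P E); nra.
Qed.

End ratio_bound.

Section history_algebra.
Context d (S : measurableType d).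

Definition hist_algebra : set (set (runT S)) :=
  [set G | exists K, <<s @hist_events _ S K >> G].

Lemma hist_algebra_setring : setring hist_algebra.
Proof.
split; first by exists 0%N; exact: sigma_algebra0.
- move=> X Y [K1 h1] [K2 h2]; exists (maxn K1 K2).
  apply: (@measurableU _ (g_sigma_algebraType (@hist_events _ S (maxn K1 K2)))).
    by apply: (hist_sigma_mono _ h1); exact: leq_maxl.
  by apply: (hist_sigma_mono _ h2); exact: leq_maxr.
- move=> X Y [K1 h1] [K2 h2]; exists (maxn K1 K2).
  apply: (@measurableD _ (g_sigma_algebraType (@hist_events _ S (maxn K1 K2)))).
    by apply: (hist_sigma_mono _ h1); exact: leq_maxl.
  by apply: (hist_sigma_mono _ h2); exact: leq_maxr.
Qed.

Lemma hist_algebra_generates : <<s @cylinders _ S >> `<=` <<sr hist_algebra >>.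
Proof.
have sA : sigma_algebra setT <<sr hist_algebra >>.
  have [s0 sD sU] := smallest_sigma_ring hist_algebra.
  split => // X hX; apply: sD => //; apply: sub_g_sigma_ring; exists 0%N.
  exact: (@measurableT _ (g_sigma_algebraType (@hist_events _ S 0))).
apply: smallest_sub => // C [k [A0 [mA0 ->]]]; apply: sub_g_sigma_ring.
by exists k.+1; apply: sub_sigma_algebra; exists A0; split => //; rewrite hist_cyl.
Qed.

End history_algebra.

(* Residue classes of windows: the runs avoiding B forever and seeing the
   pattern A at infinitely many times congruent to r modulo n + 1. Windows
   of the same class do not overlap, so each new one gives a fresh chance
   p of reaching B. *)

Section window_runs.
Context d (S : measurableType d) (R : realType) (kappa : R.-pker S ~> S).
Context (Pr : probability S R -> probability (runT S) R)
  (HPr : forall nu : probability S R, is_run_measure kappa nu (Pr nu)).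
Context (mu : probability S R).
Context (B : set S) (mB : measurable B) (n : nat) (A : nat -> set S)
  (mA : forall j, (j <= n)%N -> measurable (A j)) (p : R) (hp : (0 < p)%R)
  (hyp : forall (nu nuA : probability S R),
      (0 < Pr nu (cyl n A))%E ->
      is_cond_dist n A (Pr nu) nuA ->
      (p%:E <= Pr nuA (evF B))%E).
Local Open Scope ereal_scope.

Let P := Pr mu.

Definition window_runs (r : nat) : set (runT S) := evG (~` B) `&`
  [set rho | forall m, exists k,
    [/\ (m <= k)%N, (k %% n.+1)%N = r & cyl n A (Defs.suffix rho k)]].

(* the chance of avoiding B after a window, capped into [0, 1) *)
Let q : R := (1 - Num.min p 1)%R.

Let q_ge0 : (0 <= q)%R.
Proof. by rewrite /q subr_ge0 ge_min lexx orbT. Qed.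

Let q_lt1 : (q < 1)%R.
Proof. by rewrite /q ltrBlDr ltrDl lt_min hp ltr01. Qed.

Let q_ge : (1 - p <= q)%R.
Proof. by rewrite /q lerB// ge_min lexx. Qed.

Lemma mod_gap t' t : (t' < t)%N -> (t' %% n.+1 = t %% n.+1)%N -> (t' + n < t)%N.
Proof.
move=> tt eqm; have /eqP := eqm; rewrite eq_sym eqn_mod_dvd; last exact: ltnW.
move=> /(dvdn_leq _); rewrite subn_gt0 => /(_ tt).
by rewrite leq_subRL ?addnS// ltnW.
Qed.

Lemma measurable_window_runs r : measurable (window_runs r).
Proof.
have -> : window_runs r = evG (~` B) `&` \bigcap_m \bigcup_k
    (if (m <= k)%N && (k %% n.+1 == r)%N then shift_ev k (cyl n A) else set0).
  congr (_ `&` _); apply/seteqP; split => rho.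
    by move=> H m _; have [k [mk kr ok]] := H m; exists k => //; rewrite mk kr eqxx.
  move=> H m; have [k _] := H m I; case: ifP => // /andP[mk /eqP kr] ok.
  by exists k.
apply: measurableI; first by apply: measurable_evG; exact: measurableC.
apply: bigcapT_measurable => m; apply: bigcupT_measurable => k.
by case: ifP => // _; exact: (measurable_shift_cylA mA).
Qed.

Section first_window.
Variables (K : nat) (G : set (runT S)) (r : nat).
Hypothesis HG : <<s hist_events K >> G.

Definition no_window_before (t : nat) : set (runT S) :=
  \bigcap_(t' : nat) (if [&& (K <= t')%N, (t' < t)%N & (t' %% n.+1 == r)%N]
                      then ~` shift_ev t' (cyl n A) else setT).

Definition first_window_history (t : nat) : set (runT S) :=
  if (K <= t)%N && (t %% n.+1 == r)%N then G `&` no_window_before t else set0.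

Definition first_window (t : nat) : set (runT S) :=
  first_window_history t `&` shift_ev t (cyl n A).

Lemma hist_sigma_first_window_history t : <<s hist_events t.+1 >> (first_window_history t).
Proof.
pose GT : measurableType _ := g_sigma_algebraType (@hist_events _ S t.+1).
rewrite /first_window_history; case: ifP => [/andP[Kt /eqP tr]|_];
  last exact: (@measurable0 _ GT).
apply: hist_sigmaI; first by apply: (hist_sigma_mono _ HG); exact: leqW.
apply: (@bigcapT_measurable _ GT) => t'.
case: ifP => [/and3P[Kt' t't /eqP t'r]|_]; last exact: (@measurableT _ GT).
apply: (@measurableC _ GT); rewrite -cyl_padA.
apply: (hist_sigma_mono _ (hist_sigma_shift_cyl (measurable_padA mA))).
by apply: ltnW; apply: mod_gap => //; rewrite t'r tr.
Qed.

Lemma window_runs_cover : window_runs r `&` G `<=`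
  \bigcup_t (first_window t `&` shift_ev (t + n) (evG (~` B))).
Proof.
move=> rho [[nB occs] Gr].
pose Pk k := [&& (K <= k)%N, (k %% n.+1 == r)%N & `[< cyl n A (Defs.suffix rho k) >]].
have exP : exists k, Pk k.
  by have [k [Kk kr ok]] := occs K; exists k; rewrite /Pk Kk kr eqxx /=; apply/asboolP.
case: (ex_minnP exP) => m /and3P[Km mr /asboolP om] minm.
exists m => //; split; last by move=> j; exact: nB.
split => //; rewrite /first_window_history Km mr /=; split => // t' _.
case: ifP => // /and3P[Kt' t'm t'r] ot'.
have := minm t'; rewrite /Pk Kt' t'r /= => /(_ (asboolT ot')).
by rewrite leqNgt t'm.
Qed.

Lemma first_window_trivIset : trivIset setT first_window.
Proof.
apply/trivIsetP => i j _ _ ij.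
wlog lt_ij : i j ij / (i < j)%N.
  move=> W; case: (ltngtP i j) => [h|h|h]; first exact: W.
    by rewrite setIC; apply: W => //; rewrite eq_sym.
  by move: ij; rewrite h eqxx.
apply/seteqP; split => // rho [[Hi oi] [Hj oj]].
move: Hi Hj; rewrite /first_window_history.
case: ifP => [/andP[Ki ir]|_]; last by case.
case: ifP => [/andP[Kj jr]|_]; last by move=> _ [].
by move=> _ [_ Tj]; have := Tj i I; rewrite Ki lt_ij ir /=; apply.
Qed.

Lemma window_runs_ratio : P (window_runs r `&` G) <= q%:E * P G.
Proof.
have mH t : measurable (first_window_history t).
  exact: hist_sigma_measurable (@hist_sigma_first_window_history t).
have mD t : measurable (first_window t).
  by apply: measurableI => //; exact: (measurable_shift_cylA mA).
have mF t : measurable (first_window t `&` shift_ev (t + n) (evG (~` B))).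
  by apply: measurableI => //; apply: measurable_shift_evG; exact: measurableC.
have mG := hist_sigma_measurable HG.
have mErG := measurableI _ _ (measurable_window_runs r) mG.
apply: (le_trans (measure_sigma_subadditive P mF mErG window_runs_cover)).
apply: (@le_trans _ _ (\sum_(0 <= t <oo) (q%:E * P (first_window t)))).
  apply: lee_nneseries => [t _ _|t _]; first exact: measure_ge0.
  apply: (le_trans (one_window_bound HPr mu mB mA hyp
    (@hist_sigma_first_window_history t))).
  by apply: lee_wpmul2r; [exact: measure_ge0|rewrite lee_fin q_ge].
rewrite nneseriesZl; last by move=> t _; exact: measure_ge0.
have mUD : measurable (\bigcup_t first_window t) by exact: bigcupT_measurable.
have -> : \sum_(0 <= t <oo) P (first_window t) = P (\bigcup_t first_window t).
  by apply/cvg_lim => //; apply: measure_semi_sigma_additive => //; exact: first_window_trivIset.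
apply: lee_wpmul2l; first by rewrite lee_fin q_ge0.
apply: le_measure; rewrite ?inE//.
move=> rho [t _ [Ht _]]; move: Ht; rewrite /first_window_history.
by case: ifP => _ //; case.
Qed.

End first_window.

Lemma window_runs_null r : P (window_runs r) = 0.
Proof.
apply: (ratio_bound_null (q := q) (measurable_window_runs r) (@hist_algebra_setring _ S)) => //.
- move=> G [K HG]; split; first exact: hist_sigma_measurable HG.
  exact: window_runs_ratio r HG.
- exact: hist_algebra_generates (measurable_window_runs r).
Qed.

End window_runs.

Section recurrence.
Context d (S : measurableType d) (B : set S) (mB : measurable B) (n : nat)
  (A : nat -> set S) (mA : forall j, (j <= n)%N -> measurable (A j)).

Lemma measurable_avoid_recurrent :
  measurable (evG (~` B) `&` evGF (cyl n A) : set (runT S)).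
Proof.
have -> : evGF (cyl n A) = \bigcap_m \bigcup_k
    (if (m <= k)%N then shift_ev k (cyl n A) else set0).
  apply/seteqP; split => rho.
    by move=> H m _; have [k mk ok] := H m; exists k => //; rewrite mk.
  by move=> H m; have [k _] := H m I; case: ifP => // mk ok; exists k.
apply: measurableI; first by apply: measurable_evG; exact: measurableC.
apply: bigcapT_measurable => m; apply: bigcupT_measurable => k.
by case: ifP => // _; exact: (measurable_shift_cylA mA).
Qed.

Lemma avoid_recurrent_cover :
  evG (~` B) `&` evGF (cyl n A) `<=` \bigcup_r window_runs B n A r.
Proof.
move=> rho [nB inf]; apply: contrapT => Hno.
have Hm r : exists m, forall k, (m <= k)%N -> (k %% n.+1)%N = r ->
    ~ cyl n A (Defs.suffix rho k).
  apply: contrapT => Hr; apply: Hno; exists r => //; split => // m.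
  apply: contrapT => Hk; apply: Hr; exists m => k mk kr ok; apply: Hk; exists k.
  by split.
have [f Hf] := choice Hm.
have [k Mk ok] := inf (\max_(i < n.+1) f i).
apply: (Hf (k %% n.+1)%N k) => //; apply: leq_trans Mk.
exact: (leq_bigmax (F := fun i : 'I_n.+1 => f (nat_of_ord i))
  (Ordinal (ltn_pmod k (ltn0Sn n)))).
Qed.

End recurrence.

Unset Implicit Arguments.
Theorem mainTheorem2 (d : measure_display) (S : measurableType d) (R : realType)
  (kappa : R.-pker S ~> S)
  (Pr : probability S R -> probability (runT S) R)
  (HPr : forall mu : probability S R, is_run_measure kappa mu (Pr mu))
  (B : set S) (mB : measurable B)
  (n : nat) (A : nat -> set S) (mA : forall j, (j <= n)%N -> measurable (A j))
  (p : R) (hp : 0 < p)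
  (hyp : forall (nu nuA : probability S R),
      (0 < Pr nu (cyl n A))%E ->
      is_cond_dist n A (Pr nu) nuA ->
      (p%:E <= Pr nuA (evF B))%E) :
  forall mu : probability S R,
    Pr mu (evG (~` B) `&` evGF (cyl n A)) = 0%E.
Proof.
move=> mu.
have := measure_sigma_subadditive (Pr mu) (measurable_window_runs mB mA)
  (measurable_avoid_recurrent mB mA) (avoid_recurrent_cover (B:=B) (n:=n) (A:=A)).
rewrite (eq_eseriesr (fun r _ => window_runs_null HPr mu mB mA hp hyp r)) eseries0// => h.
by apply/eqP; rewrite eq_le h measure_ge0.
Qed.
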